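(* Let $\upsilon\in(0,1]$, $P_b>0$, $h>0$, $T>0$, $\sigma^2>0$, $B>0$, $L>0$. Define for $t>0$ $$S_{\mathrm{off}}(t)=\upsilon P_bhT+\left(\frac{\sigma^2}{h}-\upsilon P_bh\right)t-\frac{\sigma^2}{h}\,t\,2^{\frac{L}{Bt}}$$ and $$\rho(h)=\frac{\ln 2}{B\left[1+W\!\left(\frac{\upsilon P_bh^2}{\sigma^2e}-\frac1e\right)\right]},$$ where $W$ is the (principal branch of the) Lambert function, i.e. $W(x)e^{W(x)}=x$. Then $S_{\mathrm{off}}$ is a concave function on $(0,\infty)$ and it is maximized at $t=\rho(h)L$.
   Context: $S_{\mathrm{off}}(t)$ is the mobile energy savings when the offloading duration is $t$: the harvested energy $\upsilon P_bh(T-t)$ minus the transmission energy $(2^{L/(Bt)}-1)\frac{\sigma^2}{h}t$ for sending $L$ bits over bandwidth $B$ with channel gain $h$ and noise variance $\sigma^2$. *)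

From Stdlib Require Import Reals Lra ClassicalEpsilon.
Open Scope R_scope.

(* Principal branch of the Lambert W function: for x >= -1/e, the unique
   w >= -1 with w * exp w = x (chosen by Hilbert's epsilon; the value for
   x < -1/e is unspecified and never used here). *)
Definition LambertW (x : R) : R :=
  epsilon (inhabits 0) (fun w => -1 <= w /\ w * exp w = x).

Definition S_off (ups Pb h T sigma2 B L t : R) : R :=
  ups * Pb * h * T + (sigma2 / h - ups * Pb * h) * t
  - sigma2 / h * t * Rpower 2 (L / (B * t)).

Definition rho (ups Pb sigma2 B h : R) : R :=
  ln 2 / (B * (1 + LambertW (ups * Pb * h ^ 2 / (sigma2 * exp 1) - / exp 1))).

Definition concave_on_pos (f : R -> R) : Prop :=
  forall x y l, 0 < x -> 0 < y -> 0 <= l <= 1 ->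
    l * f x + (1 - l) * f y <= f (l * x + (1 - l) * y).

(* With k = L ln 2 / B we have t 2^(L/(Bt)) = t exp (k/t), the perspective of
   exp, which is convex on (0,oo).  So S_off is an affine function minus a
   positive multiple of a convex one and lies below each of its tangent lines;
   a horizontal tangent line therefore gives the global maximum.  Its abscissa
   t0 satisfies exp (k/t0) (1 - k/t0) = 1 - ups Pb h^2 / sigma2, i.e.
   w exp w = ups Pb h^2 / (sigma2 e) - 1/e for w = k/t0 - 1, so that
   t0 = k / (1 + W(...)) = rho(h) L. *)
From Stdlib Require Import Reals Lra ClassicalEpsilon.
Open Scope R_scope.

Lemma exp_m1 : exp (-1) = / exp 1.
Proof. rewrite <- exp_Ropp; f_equal; ring. Qed.

Lemma mul_exp_surjective (x : R) : - / exp 1 < x ->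
  exists w, -1 <= w /\ w * exp w = x.
Proof.
  intros Hx.
  pose proof (Rabs_pos x); pose proof (Rle_abs x).
  assert (Hexp : 1 <= exp (Rabs x + 1)).
  { pose proof (exp_ineq1_le (Rabs x + 1)); lra. }
  destruct (IVT (fun w => w * exp w - x) (-1) (Rabs x + 1)) as [w [Hw Hwx]].
  - reg.
  - lra.
  - cbv beta; rewrite exp_m1; lra.
  - cbv beta; nra.
  - exists w; split; lra.
Qed.

Lemma LambertW_spec (x : R) : - / exp 1 < x ->
  -1 < LambertW x /\ LambertW x * exp (LambertW x) = x.
Proof.
  intros Hx.
  destruct (epsilon_spec (inhabits 0) (fun w => -1 <= w /\ w * exp w = x)
              (mul_exp_surjective x Hx)) as [[Hlt | Heq] Hw];
    fold (LambertW x) in *.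
  - split; assumption.
  - rewrite <- Heq, exp_m1 in Hw; lra.
Qed.

(* exp x >= 1 + x at x = k/t - k/t0, multiplied by t exp (k/t0). *)
Lemma mul_exp_inv_tangent (k t t0 : R) : 0 < t -> 0 < t0 ->
  t0 * exp (k / t0) + exp (k / t0) * (1 - k / t0) * (t - t0) <= t * exp (k / t).
Proof.
  intros Ht Ht0.
  assert (Hsplit : exp (k / t) = exp (k / t0) * exp (k / t - k / t0)).
  { rewrite <- exp_plus; f_equal; ring. }
  pose proof (exp_ineq1_le (k / t - k / t0)) as Hexp.
  pose proof (exp_pos (k / t0)) as Hpos.
  rewrite Hsplit.
  apply Rle_trans with (t * (exp (k / t0) * (1 + (k / t - k / t0)))).
  - right; field; lra.
  - apply Rmult_le_compat_l; [lra|]. apply Rmult_le_compat_l; lra.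
Qed.

Lemma concave_on_pos_of_tangent (f d : R -> R) :
  (forall t t0, 0 < t -> 0 < t0 -> f t <= f t0 + d t0 * (t - t0)) ->
  concave_on_pos f.
Proof.
  intros Htan x y l Hx Hy Hl.
  set (z := l * x + (1 - l) * y).
  assert (Hz : 0 < z).
  { unfold z; destruct (Req_dec l 0) as [-> | Hl0]; [lra|].
    assert (0 < l * x) by (apply Rmult_lt_0_compat; lra).
    assert (0 <= (1 - l) * y) by (apply Rmult_le_pos; lra).
    lra. }
  pose proof (Htan x z Hx Hz) as Hxz; pose proof (Htan y z Hy Hz) as Hyz.
  assert (l * f x <= l * (f z + d z * (x - z))) by (apply Rmult_le_compat_l; lra).
  assert ((1 - l) * f y <= (1 - l) * (f z + d z * (y - z)))
    by (apply Rmult_le_compat_l; lra).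
  assert (l * (f z + d z * (x - z)) + (1 - l) * (f z + d z * (y - z)) = f z)
    by (unfold z; ring).
  lra.
Qed.

Definition S_off_deriv (ups Pb h sigma2 B L t : R) : R :=
  (sigma2 / h - ups * Pb * h)
  - sigma2 / h * (exp (L * ln 2 / B / t) * (1 - L * ln 2 / B / t)).

Lemma S_off_exp (ups Pb h T sigma2 B L t : R) : 0 < B -> 0 < t ->
  S_off ups Pb h T sigma2 B L t =
  ups * Pb * h * T + (sigma2 / h - ups * Pb * h) * t
  - sigma2 / h * (t * exp (L * ln 2 / B / t)).
Proof.
  intros HB Ht; unfold S_off, Rpower.
  replace (L / (B * t) * ln 2) with (L * ln 2 / B / t) by (field; lra).
  ring.
Qed.

Lemma S_off_tangent (ups Pb h T sigma2 B L t t0 : R) :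
  0 < h -> 0 < sigma2 -> 0 < B -> 0 < t -> 0 < t0 ->
  S_off ups Pb h T sigma2 B L t
  <= S_off ups Pb h T sigma2 B L t0 + S_off_deriv ups Pb h sigma2 B L t0 * (t - t0).
Proof.
  intros Hh Hs HB Ht Ht0.
  rewrite !S_off_exp by lra; unfold S_off_deriv.
  assert (Hc : 0 < sigma2 / h) by (apply Rdiv_lt_0_compat; lra).
  pose proof (mul_exp_inv_tangent (L * ln 2 / B) t t0 Ht Ht0) as Htan.
  apply (Rmult_le_compat_l (sigma2 / h)) in Htan; [|lra].
  lra.
Qed.

Lemma ln2_pos : 0 < ln 2.
Proof. rewrite <- ln_1; apply ln_increasing; lra. Qed.

Section Optimum.

Variables ups Pb h sigma2 B L : R.
Hypotheses (Hups : 0 < ups) (HPb : 0 < Pb) (Hh : 0 < h) (Hs : 0 < sigma2)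
  (HB : 0 < B) (HL : 0 < L).

Let x := ups * Pb * h ^ 2 / (sigma2 * exp 1) - / exp 1.

Lemma LambertW_arg_gt : - / exp 1 < x.
Proof.
  unfold x.
  assert (0 < ups * Pb * h ^ 2 / (sigma2 * exp 1)); [|lra].
  apply Rdiv_lt_0_compat.
  - apply Rmult_lt_0_compat; [nra | apply pow_lt; lra].
  - apply Rmult_lt_0_compat; [lra | apply exp_pos].
Qed.

Lemma rho_L_pos : 0 < rho ups Pb sigma2 B h * L.
Proof.
  destruct (LambertW_spec x LambertW_arg_gt) as [HW _].
  pose proof ln2_pos.
  unfold rho; fold x.
  apply Rmult_lt_0_compat; [|lra].
  apply Rdiv_lt_0_compat; [lra|].
  apply Rmult_lt_0_compat; lra.
Qed.

Lemma S_off_deriv_rho_L : S_off_deriv ups Pb h sigma2 B L (rho ups Pb sigma2 B h * L) = 0.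
Proof.
  destruct (LambertW_spec x LambertW_arg_gt) as [HW HWexp].
  pose proof ln2_pos; pose proof (exp_pos 1).
  unfold S_off_deriv, rho; fold x in HW, HWexp |- *.
  set (W := LambertW x) in *.
  replace (L * ln 2 / B / (ln 2 / (B * (1 + W)) * L)) with (1 + W)
    by (field; repeat split; lra).
  rewrite exp_plus.
  replace (exp 1 * exp W * (1 - (1 + W))) with (- exp 1 * (W * exp W)) by ring.
  rewrite HWexp; unfold x.
  field; lra.
Qed.

End Optimum.

Theorem lemma4 (ups Pb h T sigma2 B L : R)
  (Hups : 0 < ups <= 1) (HPb : 0 < Pb) (Hh : 0 < h) (HT : 0 < T)
  (Hs : 0 < sigma2) (HB : 0 < B) (HL : 0 < L) :
  concave_on_pos (S_off ups Pb h T sigma2 B L) /\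
  0 < rho ups Pb sigma2 B h * L /\
  (forall t, 0 < t ->
     S_off ups Pb h T sigma2 B L t
     <= S_off ups Pb h T sigma2 B L (rho ups Pb sigma2 B h * L)).
Proof.
  destruct Hups as [Hups _].
  pose proof (rho_L_pos ups Pb h sigma2 B L Hups HPb Hh Hs HB HL) as Hrho.
  split; [|split; [exact Hrho|]].
  - apply (concave_on_pos_of_tangent _ (S_off_deriv ups Pb h sigma2 B L)).
    intros t t0; apply S_off_tangent; assumption.
  - intros t Ht.
    pose proof (S_off_tangent ups Pb h T sigma2 B L t _ Hh Hs HB Ht Hrho) as Htan.
    rewrite (S_off_deriv_rho_L ups Pb h sigma2 B L Hups HPb Hh Hs HB HL) in Htan.
    lra.
Qed.
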